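(* Let $K\ge 1$ be an integer, let $h_1,\dots,h_K>0$, $\sigma^2>0$ and $P>0$ be real numbers. For $g\in\mathbb{R}$ and $b=(b_1,\dots,b_K)\in\mathbb{R}^K$ define $$\mathsf{MSE}(g,b)=\sum_{k=1}^{K}(g h_k b_k-1)^2+\sigma^2 g^2 .$$ Consider the problem of minimizing $\mathsf{MSE}(g,b)$ over $g\in\mathbb{R}$, $b\in\mathbb{R}^K$ subject to $\sum_{k=1}^K b_k^2\le P$. Set $\beta_k=\dfrac{P h_k}{\sigma^2+P h_k^2}$ for $k=1,\dots,K$. Then the minimum value of this problem equals $$\mathsf{MSE}^\star=\sum_{k=1}^{K}\frac{\sigma^2}{\sigma^2+P h_k^2},$$ and it is attained at $$g^\star=\sqrt{\frac{1}{P}\sum_{k=1}^{K}\beta_k^2},\qquad b_k^\star=\beta_k\sqrt{\frac{P}{\sum_{j=1}^{K}\beta_j^2}},\quad k=1,\dots,K.$$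
   Context: This models an over-the-air computation system with $K$ single-antenna sensors: $h_k$ is the (magnitude of the) channel coefficient of sensor $k$, $b_k$ its transmit scaling factor, $g$ the receiver scaling factor, $\sigma^2$ the receiver noise variance, and $P$ a sum-power limit. All variables are taken real (phases having been aligned), with $h_k>0$. *)

(* R is an arbitrary real closed field (covers the reals). *)
From HB Require Import structures.
From mathcomp Require Import all_boot all_order all_algebra.
Set Implicit Arguments. Unset Strict Implicit. Unset Printing Implicit Defensive.
Import Order.TTheory GRing.Theory Num.Theory.
Local Open Scope ring_scope.

Section OTA.
Variables (R : rcfType) (K : nat) (h : 'I_K -> R) (sigma2 P : R).

Definition MSE (g : R) (b : 'I_K -> R) : R :=
  \sum_(k < K) (g * h k * b k - 1) ^+ 2 + sigma2 * g ^+ 2.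

Definition beta (k : 'I_K) : R := P * h k / (sigma2 + P * h k ^+ 2).

Definition MSE_star : R := \sum_(k < K) sigma2 / (sigma2 + P * h k ^+ 2).

Definition g_star : R := Num.sqrt (P^-1 * \sum_(k < K) beta k ^+ 2).

Definition b_star (k : 'I_K) : R :=
  beta k * Num.sqrt (P / \sum_(j < K) beta j ^+ 2).
End OTA.

(* Writing x_k = g b_k, the power budget turns the noise term into a sum:
     MSE(g,b) = sum_k c_k(g b_k) + sigma^2 g^2 (P - sum_k b_k^2) / P,
   where c_k(x) = (h_k x - 1)^2 + (sigma^2 / P) x^2 is a scalar per-sensor
   cost.  Completing the square gives
     c_k(x) = sigma^2/(sigma^2 + P h_k^2) + (sigma^2 + P h_k^2)/P (x - beta_k)^2,
   so c_k >= sigma^2/(sigma^2 + P h_k^2) with equality exactly at x = beta_k.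
   Hence MSE >= MSE_star on the feasible set.  For the proposed point the
   power budget is met with equality and g_star b_star_k = beta_k, so both
   inequalities are tight and MSE(g_star, b_star) = MSE_star. *)
From HB Require Import structures.
From mathcomp Require Import all_boot all_order all_algebra.
From mathcomp Require Import ring.
Set Implicit Arguments. Unset Strict Implicit. Unset Printing Implicit Defensive.
Import Order.TTheory GRing.Theory Num.Theory.
Local Open Scope ring_scope.

(* The scalar cost of one sensor, as a function of the product x = g b_k. *)
Definition sensor_cost (R : fieldType) (s p hk x : R) : R :=
  (hk * x - 1) ^+ 2 + s / p * x ^+ 2.

Section ScalarCost.
Variables (R : realFieldType) (s p hk : R).
Hypotheses (hs : 0 < s) (hp : 0 < p).

Let D := s + p * hk ^+ 2.

Lemma denom_gt0 : 0 < D.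
Proof. by rewrite ltr_wpDr // mulr_ge0 ?sqr_ge0 ?ltW. Qed.

Lemma sensor_cost_square (x : R) :
  sensor_cost s p hk x = s / D + D / p * (x - p * hk / D) ^+ 2.
Proof.
have hD := denom_gt0; rewrite /sensor_cost /D in hD *.
by field; rewrite ?lt0r_neq0.
Qed.

Lemma sensor_cost_ge (x : R) : s / D <= sensor_cost s p hk x.
Proof.
rewrite sensor_cost_square lerDl mulr_ge0 ?sqr_ge0 //.
by rewrite divr_ge0 ?ltW ?denom_gt0.
Qed.

Lemma sensor_cost_opt : sensor_cost s p hk (p * hk / D) = s / D.
Proof. by rewrite sensor_cost_square subrr expr0n /= mulr0 addr0. Qed.

End ScalarCost.

Section OTA.
Variables (R : rcfType) (K : nat) (h : 'I_K -> R) (sigma2 P : R).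
Hypotheses (hs : 0 < sigma2) (hP : 0 < P).

(* The MSE decouples into per-sensor costs plus a slack term that is
   nonnegative exactly when the power budget holds. *)
Lemma MSE_decouple (g : R) (b : 'I_K -> R) :
  MSE h sigma2 g b = \sum_(k < K) sensor_cost sigma2 P (h k) (g * b k)
                     + sigma2 * g ^+ 2 / P * (P - \sum_(k < K) b k ^+ 2).
Proof.
rewrite /MSE /sensor_cost big_split /= -addrA; congr (_ + _).
  by apply: eq_bigr => k _; ring.
rewrite (eq_bigr (fun k => sigma2 * g ^+ 2 / P * b k ^+ 2)); last first.
  by move=> k _; ring.
by rewrite -mulr_sumr; field; rewrite lt0r_neq0.
Qed.

(* MSE_star is the sum of the per-sensor minima. *)
Lemma MSE_star_le_costs (x : 'I_K -> R) :
  MSE_star h sigma2 P <= \sum_(k < K) sensor_cost sigma2 P (h k) (x k).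
Proof. by apply: ler_sum => k _; exact: sensor_cost_ge. Qed.

Lemma MSE_star_costs_beta :
  \sum_(k < K) sensor_cost sigma2 P (h k) (beta h sigma2 P k)
  = MSE_star h sigma2 P.
Proof. by apply: eq_bigr => k _; rewrite /beta sensor_cost_opt. Qed.

Lemma MSE_star_lower_bound (g : R) (b : 'I_K -> R) :
  \sum_(k < K) b k ^+ 2 <= P -> MSE_star h sigma2 P <= MSE h sigma2 g b.
Proof.
move=> hb; rewrite MSE_decouple.
apply: le_trans (MSE_star_le_costs (fun k => g * b k)) _.
rewrite lerDl mulr_ge0 ?subr_ge0 //.
by rewrite divr_ge0 ?(ltW hP) // mulr_ge0 ?sqr_ge0 // ltW.
Qed.

Let S := \sum_(k < K) beta h sigma2 P k ^+ 2.

Hypotheses (hK : (1 <= K)%N) (hh : forall k, 0 < h k).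

(* With at least one sensor and positive gains, sum_k beta_k^2 > 0, so the
   square roots in g_star and b_star are taken of well-defined ratios. *)
Lemma beta_sum_gt0 : 0 < S.
Proof.
have hbeta k : 0 < beta h sigma2 P k.
  by rewrite /beta divr_gt0 ?mulr_gt0 ?denom_gt0.
rewrite /S (bigD1 (Ordinal hK)) //= ltr_wpDr ?exprn_gt0 //.
by rewrite sumr_ge0 // => k _; rewrite sqr_ge0.
Qed.

Lemma b_star_power : \sum_(k < K) b_star h sigma2 P k ^+ 2 = P.
Proof.
have hS := beta_sum_gt0.
rewrite /b_star (eq_bigr (fun k => beta h sigma2 P k ^+ 2 * (P / S))).
  by rewrite -mulr_suml -/S mulrC divfK ?lt0r_neq0.
by move=> k _; rewrite exprMn sqr_sqrtr // divr_ge0 ?ltW.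
Qed.

Lemma g_star_b_star (k : 'I_K) :
  g_star h sigma2 P * b_star h sigma2 P k = beta h sigma2 P k.
Proof.
have hS := beta_sum_gt0.
rewrite /g_star /b_star -/S mulrCA -sqrtrM ?mulr_ge0 ?invr_ge0 ?ltW //.
have -> : P^-1 * S * (P / S) = 1 by field; rewrite ?lt0r_neq0.
by rewrite sqrtr1 mulr1.
Qed.

End OTA.

Theorem theorem1 (R : rcfType) (K : nat) (h : 'I_K -> R) (sigma2 P : R)
  (hK : (1 <= K)%N) (hh : forall k, 0 < h k) (hs : 0 < sigma2) (hP : 0 < P) :
  (* MSE_star is a lower bound on the feasible set *)
  (forall (g : R) (b : 'I_K -> R),
      \sum_(k < K) b k ^+ 2 <= P -> MSE_star h sigma2 P <= MSE h sigma2 g b)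
  (* and it is attained at the feasible point (g_star, b_star) *)
  /\ \sum_(k < K) b_star h sigma2 P k ^+ 2 <= P
  /\ MSE h sigma2 (g_star h sigma2 P) (b_star h sigma2 P) = MSE_star h sigma2 P.
Proof.
have power : \sum_(k < K) b_star h sigma2 P k ^+ 2 = P.
  exact: b_star_power.
split; first exact: MSE_star_lower_bound.
split; first by rewrite power.
rewrite (MSE_decouple h sigma2 hP) power subrr mulr0 addr0 -MSE_star_costs_beta //.
by apply: eq_bigr => k _; rewrite g_star_b_star.
Qed.
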